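(* Let $t_0>0$ and let $\{\sigma_t\}_{0<t<t_0}$ be a family of positive semidefinite $2\times 2$ complex matrices, written in a fixed orthonormal basis $\{\ket0,\ket1\}$ of $\mathbb C^2$ as $$\sigma_t=\begin{pmatrix} a_t & b_t\\ \bar b_t & d_t\end{pmatrix},$$ with $\operatorname{tr}\sigma_t>0$ and such that the normalized states $\sigma_t/\operatorname{tr}\sigma_t$ converge to the pure state $\ket0\bra0$ as $t\to0$. Suppose there exist constants $l>0$ and $c<\infty$ such that $|b_t|\ge l t$ and $d_t\le c t^2$ for all sufficiently small $t>0$. Then there is no representation $$\sigma_t=\int_\Lambda f_t(\lambda)\,\tau_\lambda\,d\mu(\lambda)\qquad\text{for all } 0<t<t_0,$$ where $\mu$ is a finite (positive) measure on a measurable space $\Lambda$ not depending on $t$, $\lambda\mapsto\tau_\lambda$ is a measurable map into the set of $2\times2$ density matrices (qubit states), and, for each $t$, $f_t:\Lambda\to[0,1]$ is measurable. In particular, any projective assemblage containing such a family of unnormalized conditional states admits no local hidden state model with a finite hidden-state measure.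
   Context: A local hidden state (LHS) model for an assemblage of unnormalized conditional states $\sigma_{a|M}$ on a trusted qubit is a representation $\sigma_{a|M}=\int_\Lambda p(a|M,\lambda)\tau_\lambda\,d\mu(\lambda)$ with $\mu$ a finite measure (e.g. a probability measure), $\tau_\lambda$ density matrices, and response functions $p(a|M,\lambda)\in[0,1]$ summing to one over outcomes $a$. *)

From HB Require Import structures.
From mathcomp Require Import all_boot all_order all_algebra.
From mathcomp Require Import complex.
From mathcomp Require Import all_classical all_reals all_analysis.
Set Implicit Arguments. Unset Strict Implicit. Unset Printing Implicit Defensive.
Import Order.TTheory GRing.Theory Num.Theory.
Import numFieldNormedType.Exports.
Local Open Scope ring_scope.

Definition adjmx (R : rcfType) (m n : nat) (A : 'M[R[i]]_(m, n)) : 'M[R[i]]_(n, m) :=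
  \matrix_(i < n, j < m) (A j i)^*.

Definition psd (R : rcfType) (A : 'M[R[i]]_2) : Prop :=
  adjmx A = A /\ forall v : 'cV[R[i]]_2, 0 <= (adjmx v *m A *m v) 0 0.

Definition density (R : rcfType) (A : 'M[R[i]]_2) : Prop :=
  psd A /\ \tr A = 1.

Definition ket0bra0 (R : rcfType) : 'M[R[i]]_2 :=
  \matrix_(i < 2, j < 2) (if (i == 0) && (j == 0) then 1 else 0).

From HB Require Import structures.
From mathcomp Require Import all_boot all_order all_algebra.
From mathcomp Require Import complex.
From mathcomp Require Import all_classical all_reals all_analysis.
From mathcomp Require Import ring lra measurable_realfun.
Import Order.TTheory GRing.Theory Num.Theory.
Import numFieldNormedType.Exports.
Set Implicit Arguments. Unset Strict Implicit. Unset Printing Implicit Defensive.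
Local Open Scope ring_scope.
Local Open Scope classical_set_scope.

(* A qubit state tau satisfies (Re tau_01)^2 + (Im tau_01)^2 <= y := Re tau_11.  Hence, for
   h = Re tau_01 or Im tau_01 and any eps, eta > 0, AM-GM on the level set {0 < y <= eta^2}
   and |h| <= sqrt y <= y / eta off it give
     |h| <= eps/2 * 1_{0 < y <= eta^2} + (1/(2 eps) + 1/eta) * y.
   Integrating against f_t bounds |b_t| by eps * mu{0 < y <= eta^2} + (1/eps + 2/eta) * d_t.
   As mu is finite, mu{0 < y <= eta^2} vanishes with eta; fixing eta so that this mass is
   small and taking eps proportional to t, the bound d_t <= c t^2 makes the right-hand side
   smaller than l t for small t, contradicting |b_t| >= l t. *)

Lemma big_ord2 (V : nmodType) (F : 'I_2 -> V) : \sum_(i < 2) F i = F 0 + F 1.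
Proof. by rewrite !big_ord_recl big_ord0 addr0; congr (F _ + F _); apply/val_inj. Qed.

Section Qubit.
Variable R : rcfType.
Implicit Types (A : 'M[R[i]]_2).

Lemma adjmx_delta (i : 'I_2) : adjmx (delta_mx i 0) = delta_mx 0 i :> 'rV[R[i]]_2.
Proof. by apply/matrixP => k j; rewrite !mxE rmorph_nat andbC. Qed.

Lemma psd_diag_ge0 A : psd A -> forall i, 0 <= A i i.
Proof.
case=> _ hq i; have := hq (delta_mx i 0).
by rewrite adjmx_delta -rowE -colE !mxE.
Qed.

Lemma density_offdiag_sqr_le A : density A ->
  complex.Re (A 0 1) ^+ 2 + complex.Im (A 0 1) ^+ 2 <= complex.Re (A 1 1).
Proof.
move=> [hpsd htr]; have [hA hq] := hpsd.
have a_ge0 := psd_diag_ge0 hpsd 0; have d_ge0 := psd_diag_ge0 hpsd 1.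
have h10 : A 1 0 = (A 0 1)^* by rewrite -[in LHS]hA mxE.
(* With [b = A 0 1], [d = A 1 1] and [A 0 0 = 1 - d], the form at [v = (-b, 1)] is
   [d - (1 + d) |b|^2]. *)
have := hq (\col_i (if i == 0 then - A 0 1 else 1)).
rewrite !mxE !big_ord2 !mxE !big_ord2 !mxE /= h10.
move: htr a_ge0 d_ge0; rewrite /mxtrace big_ord2.
case: (A 0 0) => a0 a1; case: (A 0 1) => b0 b1; case: (A 1 1) => d0 d1.
rewrite !lecE /=; simpc => -[tr_re _] /andP[/eqP -> _] /andP[_ d0_ge0] /andP[_].
have -> : a0 = 1 - d0 by lra.
rewrite !expr2; nra.
Qed.
End Qubit.

Lemma normc_le_Re_Im (R : rcfType) (z : R[i]) :
  `|z| <= (`|complex.Re z| + `|complex.Im z|)%:C%C.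
Proof.
set s := `|complex.Re z| + `|complex.Im z|.
have <- : Num.sqrt (s ^+ 2) = s by rewrite sqrtr_sqr ger0_norm ?addr_ge0.
rewrite normc_def lecR ler_wsqrtr // /s sqrrD !real_normK ?num_real //.
have : 0 <= `|complex.Re z| * `|complex.Im z| by rewrite mulr_ge0.
rewrite mulr2n; lra.
Qed.

Section SplitBound.
Variable R : realFieldType.
Implicit Types (eps eta h y : R).

Lemma normr_le_AMGM eps h y : 0 < eps -> h ^+ 2 <= y ->
  `|h| <= eps / 2 + y / (2 * eps).
Proof.
move=> eps_gt0 hy.
have -> : eps / 2 + y / (2 * eps) = (eps ^+ 2 + y) / (2 * eps) by field; lra.
rewrite ler_pdivlMr; last lra.
have := sqr_ge0 (`|h| - eps); rewrite -real_normK ?num_real // in hy.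
rewrite !expr2 in hy *; nra.
Qed.

Lemma normr_le_div eps h y : 0 < eps -> h ^+ 2 <= y -> eps ^+ 2 <= y -> `|h| <= y / eps.
Proof.
move=> eps_gt0 hy epsy; rewrite ler_pdivlMr //.
have := normr_ge0 h; rewrite -real_normK ?num_real // in hy.
rewrite !expr2 in hy epsy; nra.
Qed.

Lemma normr_le_split eps eta h y : 0 < eps -> 0 < eta -> h ^+ 2 <= y ->
  `|h| <= eps / 2 * \1_`]0, eta ^+ 2] y + ((2 * eps)^-1 + eta^-1) * y.
Proof.
move=> eps_gt0 eta_gt0 hy; have y_ge0 := le_trans (sqr_ge0 h) hy.
have : 0 <= y / (2 * eps) by apply: divr_ge0 => //; lra.
have : 0 <= y / eta by apply: divr_ge0 => //; lra.
rewrite indicE; case: (boolP (y \in _)) => [_|]; rewrite /= ?mulr1 ?mulr0.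
  by have := normr_le_AMGM eps_gt0 hy; lra.
rewrite mem_setE in_itv /= negb_and -leNgt -ltNge => /orP[y_le0|etay].
  have -> : h = 0 by apply/eqP; rewrite -sqrf_eq0 eq_le sqr_ge0 andbT (le_trans hy).
  rewrite normr0 => *; lra.
by have := normr_le_div eta_gt0 hy (ltW etay); lra.
Qed.
End SplitBound.

Section MeasureBounds.
Context d (L : measurableType d) (R : realType) (mu : {measure set L -> \bar R}).

Lemma abse_integral_le_split (g h y : L -> R) (eps eta : R) :
  0 < eps -> 0 < eta ->
  measurable_fun setT g -> measurable_fun setT h -> measurable_fun setT y ->
  (forall x, 0 <= g x <= 1) -> (forall x, h x ^+ 2 <= y x) ->
  (`| \int[mu]_x (g x * h x)%:E | <=
     (eps / 2)%:E * mu (y @^-1` `]0%R, (eta ^+ 2)%R]) +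
     ((2 * eps)^-1 + eta^-1)%:E * \int[mu]_x (g x * y x)%:E)%E.
Proof.
move=> eps_gt0 eta_gt0 mg mh my g01 hy.
set A := y @^-1` _; set C := (2 * eps)^-1 + eta^-1.
have mA : measurable A by rewrite -[A]setTI; exact: my.
have C_ge0 : 0 <= C by rewrite addr_ge0 // invr_ge0 ltW // mulr_gt0.
have gy_ge0 x : 0 <= g x * y x.
  by rewrite mulr_ge0 ?(le_trans (sqr_ge0 (h x)) (hy x)) //; case/andP: (g01 x).
have pointwise x : `|g x * h x| <= eps / 2 * \1_A x + C * (g x * y x).
  have /andP[g_ge0 g_le1] := g01 x.
  rewrite normrM ger0_norm //.
  apply: le_trans (ler_wpM2l g_ge0 (normr_le_split eps_gt0 eta_gt0 (hy x))) _.
  rewrite mulrDr mulrCA [C * _]mulrCA lerD2r.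
  by rewrite ler_wpM2l ?ler_piMl //; lra.
apply: le_trans (le_abse_integral mu measurableT _) _.
  by apply/measurable_EFinP; exact: measurable_funM.
apply: (@le_trans _ _ (\int[mu]_x ((eps / 2 * \1_A x)%:E + (C * (g x * y x))%:E))%E).
  apply: ge0_le_integral => //.
  - by apply/measurable_EFinP/measurableT_comp => //; exact: measurable_funM.
  - apply/measurable_EFinP/measurable_funD; apply: measurable_funM => //.
    exact: measurable_funM.
  - by move=> x _; rewrite -EFinD lee_fin pointwise.
rewrite ge0_integralD //; last 4 first.
- by move=> x _; rewrite lee_fin mulr_ge0 ?divr_ge0 //; lra.
- by apply/measurable_EFinP; apply: measurable_funM => //; exact: measurable_indic.
- by move=> x _; rewrite lee_fin mulr_ge0.
- by apply/measurable_EFinP; apply: measurable_funM => //; exact: measurable_funM.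
under eq_integral do rewrite EFinM.
under [X in (_ + X)%E]eq_integral do rewrite EFinM.
rewrite ge0_integralZl_EFin //; last 2 first.
- by apply/measurable_EFinP; exact: measurable_indic.
- lra.
rewrite ge0_integralZl_EFin ?integral_indic ?setIT //.
- by move=> x _; rewrite lee_fin.
- by apply/measurable_EFinP; exact: measurable_funM.
Qed.

Lemma finite_measure_small_level_set (y : L -> R) (e : R) :
  (mu setT < +oo)%E -> measurable_fun setT y -> 0 < e ->
  exists2 eta : R, 0 < eta & fine (mu (y @^-1` `]0, eta ^+ 2])) < e.
Proof.
move=> mu_fin my e_gt0.
pose F n := y @^-1` `]0, (n.+1%:R^-1 : R) ^+ 2].
have mF n : measurable (F n) by rewrite -[F n]setTI; exact: my.
have F_fin n : (mu (F n) < +oo)%E.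
  by apply: le_lt_trans mu_fin; rewrite le_measure ?inE.
have F_decr : nonincreasing_seq F.
  move=> m n mn; rewrite subsetEset => x; rewrite /F /= !in_itv /= => /andP[-> yx].
  apply: le_trans yx _; rewrite lerXn2r ?nnegrE ?invr_ge0 //.
  by rewrite lef_pV2 ?posrE // ler_nat.
have F_cap : \bigcap_n F n = set0.
  rewrite -subset0 => x Fx; have := Fx 0%N I; rewrite /F /= in_itv /= => /andP[y_gt0 _].
  have [k hk] := ltr_add_invr y_gt0; rewrite add0r in hk.
  have := Fx k I; rewrite /F /= in_itv /= => /andP[_]; apply/negP; rewrite -ltNge.
  apply: le_lt_trans hk; rewrite expr2 ler_piMl ?invr_ge0 //.
  by rewrite invf_le1 ?ler1n.
have := nonincreasing_cvg_mu (F_fin 0%N) mF _ F_decr.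
rewrite F_cap measure0 => /(_ measurable0) /fine_cvgP[_ /cvgr_lt/(_ _ e_gt0) F_small].
have [n /= hn] := filter_ex F_small.
by exists n.+1%:R^-1; rewrite ?invr_gt0.
Qed.
End MeasureBounds.

Definition is_weighted_integral d (L : measurableType d) (R : realType)
    (mu : {measure set L -> \bar R}) (g : L -> R) (tau : L -> 'M[R[i]]_2)
    (s : 'M[R[i]]_2) : Prop :=
  forall i j : 'I_2,
    (complex.Re (s i j))%:E = (\int[mu]_x (g x * complex.Re (tau x i j))%:E)%E /\
    (complex.Im (s i j))%:E = (\int[mu]_x (g x * complex.Im (tau x i j))%:E)%E.

Section WeightedIntegral.
Context d (L : measurableType d) (R : realType) (mu : {measure set L -> \bar R}).
Variables (g : L -> R) (tau : L -> 'M[R[i]]_2).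
Hypothesis mu_fin : (mu setT < +oo)%E.
Hypothesis mg : measurable_fun setT g.
Hypothesis g01 : forall x, 0 <= g x <= 1.
Hypothesis tau_dens : forall x, density (tau x).
Hypothesis tau_meas : forall i j : 'I_2,
  measurable_fun setT (fun x => complex.Re (tau x i j)) /\
  measurable_fun setT (fun x => complex.Im (tau x i j)).

Lemma weighted_integral_offdiag_le (s : 'M[R[i]]_2) (eps eta : R) :
  is_weighted_integral mu g tau s -> 0 < eps -> 0 < eta ->
  `|complex.Re (s 0 1)| + `|complex.Im (s 0 1)| <=
    eps * fine (mu ((fun x => complex.Re (tau x 1 1)) @^-1` `]0, eta ^+ 2])) +
    2 * (((2 * eps)^-1 + eta^-1) * complex.Re (s 1 1)).
Proof.
move=> s_eq eps_gt0 eta_gt0.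
set y := fun x => _; set A := y @^-1` _; set C := (2 * eps)^-1 + eta^-1.
have my : measurable_fun setT y := (tau_meas 1 1).1.
have A_fin : mu A \is a fin_num.
  rewrite ge0_fin_numE // (le_lt_trans _ mu_fin) // le_measure ?inE //.
  by rewrite -[A]setTI; exact: my.
have entry_le (h : L -> R) (z : R) : measurable_fun setT h ->
    (forall x, h x ^+ 2 <= y x) -> z%:E = (\int[mu]_x (g x * h x)%:E)%E ->
    `|z| <= eps / 2 * fine (mu A) + C * complex.Re (s 1 1).
  move=> mh hy z_eq; have := abse_integral_le_split mu eps_gt0 eta_gt0 mg mh my g01 hy.
  by rewrite -z_eq -(s_eq 1 1).1 -(fineK A_fin) -!EFinM -EFinD abse_EFin lee_fin.
have Re_le x : complex.Re (tau x 0 1) ^+ 2 <= y x.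
  by apply: le_trans (density_offdiag_sqr_le (tau_dens x)); rewrite lerDl sqr_ge0.
have Im_le x : complex.Im (tau x 0 1) ^+ 2 <= y x.
  by apply: le_trans (density_offdiag_sqr_le (tau_dens x)); rewrite lerDr sqr_ge0.
have := entry_le _ _ (tau_meas 0 1).1 Re_le (s_eq 0 1).1.
have := entry_le _ _ (tau_meas 0 1).2 Im_le (s_eq 0 1).2.
lra.
Qed.
End WeightedIntegral.

Lemma split_bound_lt_linear (R : realFieldType) (a l eta m t Y eps : R) :
  0 < a -> 0 < l -> 0 < eta -> 0 < t -> 0 <= m ->
  m < l ^+ 2 / (8 * a) -> t < eta * l / (8 * a) -> Y <= a * t ^+ 2 ->
  eps = 2 * a * t / l ->
  eps * m + 2 * (((2 * eps)^-1 + eta^-1) * Y) < l * t.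
Proof.
(* [eps] makes the [Y / eps] term at most [l t / 2]; the other two are below [l t / 4]. *)
move=> a_gt0 l_gt0 eta_gt0 t_gt0 m_ge0 + + Y_le ->.
rewrite !ltr_pdivlMr ?mulr_gt0 // => m_small t_small.
have C_ge0 : 0 <= (2 * (2 * a * t / l))^-1 + eta^-1.
  by rewrite addr_ge0 // invr_ge0 ?ltW // !mulr_gt0 ?invr_gt0.
have mass_term : 2 * a * t / l * m < l * t / 4.
  rewrite -subr_gt0 (_ : _ - _ = t / (4 * l) * (l ^+ 2 - m * (8 * a))).
    by rewrite mulr_gt0 ?divr_gt0 ?mulr_gt0 // subr_gt0.
  by field; rewrite lt0r_neq0.
have diag_term : 2 * a * t ^+ 2 / eta < l * t / 4.
  rewrite -subr_gt0 (_ : _ - _ = t / (4 * eta) * (eta * l - t * (8 * a))).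
    by rewrite mulr_gt0 ?divr_gt0 ?mulr_gt0 // subr_gt0.
  by field; rewrite lt0r_neq0.
have : 2 * (((2 * (2 * a * t / l))^-1 + eta^-1) * Y) <= l * t / 2 + 2 * a * t ^+ 2 / eta.
  rewrite (_ : l * t / 2 + _ = 2 * (((2 * (2 * a * t / l))^-1 + eta^-1) * (a * t ^+ 2))).
    by apply: ler_wpM2l => //; apply: ler_wpM2l.
  by field; rewrite !lt0r_neq0.
lra.
Qed.

Theorem mainTheorem1 (R : realType) (t0 : R) (ht0 : 0 < t0)
  (sigma : R -> 'M[R[i]]_2)
  (hpsd : forall t, 0 < t < t0 -> psd (sigma t))
  (htr : forall t, 0 < t < t0 -> 0 < \tr (sigma t))
  (hconv : forall i j : 'I_2,
     (fun t => complex.Re ((\tr (sigma t))^-1 * sigma t i j)) @ 0^'+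
       --> complex.Re (ket0bra0 R i j) /\
     (fun t => complex.Im ((\tr (sigma t))^-1 * sigma t i j)) @ 0^'+
       --> complex.Im (ket0bra0 R i j))
  (l c : R) (hl : 0 < l)
  (hb : \forall t \near 0^'+, (l * t)%:C%C <= `| sigma t 0 1 |)
  (hd : \forall t \near 0^'+, sigma t 1 1 <= (c * t ^+ 2)%:C%C) :
  forall (d : measure_display) (L : measurableType d)
    (mu : {measure set L -> \bar R}) (tau : L -> 'M[R[i]]_2)
    (f : R -> L -> R),
  (mu setT < +oo)%E ->
  (forall x, density (tau x)) ->
  (forall i j : 'I_2, measurable_fun setT (fun x => complex.Re (tau x i j)) /\
                      measurable_fun setT (fun x => complex.Im (tau x i j))) ->
  (forall t, 0 < t < t0 -> measurable_fun setT (f t) /\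
                           forall x, 0 <= f t x <= 1) ->
  ~ (forall t, 0 < t < t0 -> forall i j : 'I_2,
       (complex.Re (sigma t i j))%:E =
         (\int[mu]_x (f t x * complex.Re (tau x i j))%:E)%E /\
       (complex.Im (sigma t i j))%:E =
         (\int[mu]_x (f t x * complex.Im (tau x i j))%:E)%E).
Proof.
move=> d L mu tau f mu_fin tau_dens tau_meas f_resp sigma_eq.
pose a := `|c| + 1.
have a_gt0 : 0 < a by rewrite ltr_pwDr.
have c_le_a : c <= a by rewrite /a; have := ler_norm c; lra.
have e_gt0 : 0 < l ^+ 2 / (8 * a) by rewrite divr_gt0 ?exprn_gt0 ?mulr_gt0.
have [eta eta_gt0 A_small] :=
  finite_measure_small_level_set mu_fin (tau_meas 1 1).1 e_gt0.
have : \forall t \near 0^'+, [/\ 0 < t < t0, (l * t)%:C%C <= `| sigma t 0 1 |,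
    sigma t 1 1 <= (c * t ^+ 2)%:C%C & t < eta * l / (8 * a)].
  near=> t; split; [apply/andP; split| by near: t | by near: t |].
  - by near: t; exact: nbhs_right_gt.
  - by near: t; exact: nbhs_right_lt.
  - by near: t; apply: nbhs_right_lt; rewrite divr_gt0 ?mulr_gt0.
case/filter_ex => t [t_in b_ge d_le t_small]; have /andP[t_gt0 _] := t_in.
have [mft f01] := f_resp t t_in.
have eps_gt0 : 0 < 2 * a * t / l by rewrite divr_gt0 ?mulr_gt0.
have := weighted_integral_offdiag_le mu_fin mft f01 tau_dens tau_meas (sigma_eq t t_in)
  eps_gt0 eta_gt0.
have := le_trans b_ge (normc_le_Re_Im _); rewrite lecR.
have Y_le : complex.Re (sigma t 1 1) <= a * t ^+ 2.
  move: d_le; rewrite lecE => /andP[_ /le_trans]; apply.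
  by rewrite ler_wpM2r ?sqr_ge0.
have := split_bound_lt_linear a_gt0 hl eta_gt0 t_gt0 (fine_ge0 (measure_ge0 _ _))
  A_small t_small Y_le erefl.
lra.
Unshelve. all: by end_near.
Qed.
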